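(* Let $k,l$ be positive integers and let $f(s,u)=\sum_{m=k}^\infty\sum_{n=l}^\infty a_{m,n}m^{-s}n^{-u}$ be a double Dirichlet series that is absolutely convergent on $\mathbb H_{\rho_1}\times\mathbb H_{\rho_2}$ for some $\rho_1,\rho_2\in\mathbb R$. If $r>\max\{\rho_1,\rho_2\}$, then there exist positive constants $C_r,D_r$ such that for all $s,u\in\mathbb H_r$: $$|k^sl^uf(s,u)-a_{k,l}|\le C_r\Big(\frac{l^{\Re u}}{(l+1)^{\Re u-r}}+\frac{k^{\Re s}}{(k+1)^{\Re s-r}}+\frac{k^{\Re s}l^{\Re u}}{(k+1)^{\Re s-r}(l+1)^{\Re u-r}}\Big),$$ $$\Big|l^uf(s,u)-\sum_{m=k}^\infty a_{m,l}m^{-s}\Big|\le D_r\Big(\frac{l^{\Re u}}{(l+1)^{\Re u-r}}+\frac{k^{\Re s}l^{\Re u}}{(k+1)^{\Re s-r}(l+1)^{\Re u-r}}\Big).$$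
   Context: $\mathbb H_\rho=\{s\in\mathbb C:\Re s>\rho\}$. *)

From Stdlib Require Import Reals.
From Coquelicot Require Import Coquelicot.
Open Scope R_scope.

(* n^s = exp(s log n) for a positive integer n and complex s *)
Definition cpow (n : nat) (s : C) : C :=
  (exp (Re s * ln (INR n)) * cos (Im s * ln (INR n)),
   exp (Re s * ln (INR n)) * sin (Im s * ln (INR n))).

Definition CSeries (a : nat -> C) : C :=
  (Series (fun n => Re (a n)), Series (fun n => Im (a n))).

(* Absolute convergence of sum_{m>=k} sum_{n>=l} a m n m^{-s} n^{-u}
   on H_rho1 x H_rho2: the (nonnegative) partial sums over all finite
   rectangles of |a m n| m^{-Re s} n^{-Re u} are bounded. *)
Definition dd_abs_conv (a : nat -> nat -> C) (k l : nat) (rho1 rho2 : R) : Prop :=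
  forall s u : C, Re s > rho1 -> Re u > rho2 ->
  exists M : R, forall M1 N1 : nat,
    sum_f_R0 (fun i => sum_f_R0 (fun j =>
      Cmod (a (i + k)%nat (j + l)%nat)
      * Rpower (INR (i + k)) (- Re s) * Rpower (INR (j + l)) (- Re u)) N1) M1 <= M.

(* f(s,u) = sum_{m>=k} sum_{n>=l} a m n m^{-s} n^{-u} (iterated sum; equal to
   the double sum under absolute convergence) *)
Definition ddseries (a : nat -> nat -> C) (k l : nat) (s u : C) : C :=
  CSeries (fun i => CSeries (fun j =>
    (a (i + k)%nat (j + l)%nat * cpow (i + k) (- s) * cpow (j + l) (- u))%C)).

Definition drow (a : nat -> nat -> C) (k l : nat) (s : C) : C :=
  CSeries (fun i => (a (i + k)%nat l * cpow (i + k) (- s))%C).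

(* Let b i j = |a (k+i) (l+j)| (k+i)^-r (l+j)^-r.  Absolute convergence at s = u = r
   bounds every rectangle sum of b by some M; a double series whose terms are at most
   c * b i j in modulus then has modulus at most c * M.  For Re s, Re u > r, the term
   (i, j) of k^s l^u f(s, u) has modulus w_k(k+i) w_l(l+j) b i j, where
   w_k(m) = k^(Re s) m^(r - Re s) equals k^r for m = k and is at most
   k^(Re s) / (k+1)^(Re s - r) for m > k.  The term (0, 0) is a k l, so removing it
   gives the first estimate; multiplying by k^-s and removing the column j = 0, whose
   sum is the single series, gives the second. *)

From Stdlib Require Import Reals Lra Lia.
From Coquelicot Require Import Coquelicot.
Open Scope R_scope.

Lemma nonneg_series_bounded (a : nat -> R) (M : R) :
  (forall n, 0 <= a n) -> (forall N, sum_f_R0 a N <= M) ->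
  ex_series a /\ Series a <= M.
Proof.
  intros a_ge0 a_bounded.
  destruct (growing_cv (fun N => sum_f_R0 a N)) as [L HL].
  - intro n; simpl; specialize (a_ge0 (S n)); lra.
  - exists M; intros x [n ->]; apply a_bounded.
  - split; [exists L; now apply is_series_Reals|].
    rewrite (is_series_unique a L) by now apply is_series_Reals.
    apply (Rle_cv_lim (Vn := fun _ => M) a_bounded HL).
    apply is_lim_seq_Reals, is_lim_seq_const.
Qed.

Lemma Series_zero_tail (a : nat -> R) : (forall n, a (S n) = 0) -> Series a = a 0%nat.
Proof.
  intro a_zero. apply is_series_unique, is_series_Reals.
  intros eps Heps; exists 0%nat; intros n _.
  replace (sum_f_R0 a n) with (a 0%nat).
  - unfold R_dist; rewrite Rminus_diag, Rabs_R0; lra.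
  - induction n as [|n IH]; simpl in *; [reflexivity|]. rewrite a_zero, <- IH; ring.
Qed.

Lemma Series_ge0 (a : nat -> R) : (forall n, 0 <= a n) -> ex_series a -> 0 <= Series a.
Proof.
  intros a_ge0 a_ex. rewrite <- (Series_zero_tail (fun _ => 0)) by reflexivity.
  apply Series_le; trivial. intro n; split; [lra | apply a_ge0].
Qed.

Lemma is_series_sum_f_R0 (a : nat -> nat -> R) (N : nat) :
  (forall i, ex_series (a i)) ->
  is_series (fun j => sum_f_R0 (fun i => a i j) N) (sum_f_R0 (fun i => Series (a i)) N).
Proof.
  intro rows. induction N as [|N IH]; simpl.
  - apply Series_correct, rows.
  - apply (is_series_plus _ _ _ _ IH), Series_correct, rows.
Qed.

Lemma sum_f_R0_swap (a : nat -> nat -> R) (m n : nat) :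
  sum_f_R0 (fun i => sum_f_R0 (a i) n) m = sum_f_R0 (fun j => sum_f_R0 (fun i => a i j) m) n.
Proof.
  induction m as [|m IH]; simpl; [reflexivity|]. rewrite IH, plus_sum. reflexivity.
Qed.

Definition ex_CSeries (w : nat -> C) : Prop :=
  ex_series (fun n => Re (w n)) /\ ex_series (fun n => Im (w n)).

Definition delta0 (x : C) (n : nat) : C :=
  match n with O => x | S _ => 0%C end.

Lemma Cminus_diag (x : C) : (x - x = 0)%C.
Proof. ring. Qed.

Lemma Cminus_0_r (x : C) : (x - 0 = x)%C.
Proof. ring. Qed.

Lemma im_le_Cmod (c : C) : Rabs (Im c) <= Cmod c.
Proof. eapply Rle_trans; [apply Rmax_r | apply Rmax_Cmod]. Qed.

Lemma ex_CSeries_le (w : nat -> C) (B : nat -> R) :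
  (forall n, Cmod (w n) <= B n) -> ex_series B -> ex_CSeries w.
Proof.
  intros w_le_B B_ex.
  split; apply (@ex_series_le R_AbsRing R_CompleteNormedModule _ B); trivial;
    intro n; eapply Rle_trans; try apply w_le_B.
  - apply re_le_Cmod.
  - apply im_le_Cmod.
Qed.

Lemma CSeries_ext (w v : nat -> C) : (forall n, w n = v n) -> CSeries w = CSeries v.
Proof. intro wv. unfold CSeries. f_equal; apply Series_ext; intro n; now rewrite wv. Qed.

Lemma CSeries_scal_l (c : C) (w : nat -> C) :
  ex_CSeries w -> CSeries (fun n => c * w n)%C = (c * CSeries w)%C.
Proof.
  intros [w_re w_im]. unfold CSeries.
  rewrite (Series_ext (fun n => Re (c * w n)%C) (fun n => Re c * Re (w n) - Im c * Im (w n))) by reflexivity.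
  rewrite (Series_ext (fun n => Im (c * w n)%C) (fun n => Re c * Im (w n) + Im c * Re (w n))) by reflexivity.
  rewrite Series_minus, Series_plus, !Series_scal_l;
    try exact (ex_series_scal_l _ _ w_re); try exact (ex_series_scal_l _ _ w_im).
  unfold Cmult; simpl. f_equal; ring.
Qed.

Lemma CSeries_minus (w v : nat -> C) :
  ex_CSeries w -> ex_CSeries v -> CSeries (fun n => w n - v n)%C = (CSeries w - CSeries v)%C.
Proof.
  intros [w_re w_im] [v_re v_im]. unfold CSeries.
  rewrite (Series_ext (fun n => Re (w n - v n)%C) (fun n => Re (w n) - Re (v n))) by reflexivity.
  rewrite (Series_ext (fun n => Im (w n - v n)%C) (fun n => Im (w n) - Im (v n))) by reflexivity.
  rewrite !Series_minus by assumption. reflexivity.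
Qed.

Lemma CSeries_delta0 (x : C) : CSeries (delta0 x) = x.
Proof. unfold CSeries. rewrite !Series_zero_tail by reflexivity. now destruct x. Qed.

Lemma Cmod_CSeries_le (w : nat -> C) (B : nat -> R) :
  (forall n, Cmod (w n) <= B n) -> ex_series B -> Cmod (CSeries w) <= Series B.
Proof.
  intros w_le_B B_ex. set (z := CSeries w).
  assert (cz_le_B : forall n, Cmod (Cconj z * w n) <= Cmod z * B n).
  { intro n. rewrite Cmod_mult, Cmod_conj.
    apply Rmult_le_compat_l; [apply Cmod_ge_0 | apply w_le_B]. }
  assert (czB_ex : ex_series (fun n => Cmod z * B n)) by exact (ex_series_scal_l _ _ B_ex).
  assert (abs_ex : ex_series (fun n => Rabs (Re (Cconj z * w n)))).
  { apply (@ex_series_le R_AbsRing R_CompleteNormedModule _ _) with (2 := czB_ex).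
    intro n. change (Rabs (Rabs (Re (Cconj z * w n)%C)) <= Cmod z * B n).
    rewrite Rabs_Rabsolu. eapply Rle_trans; [apply re_le_Cmod | apply cz_le_B]. }
  (* |z|^2 = Re (conj z * z) = sum_n Re (conj z * w n) <= |z| * sum_n B n *)
  assert (sq_le : Cmod z ^ 2 <= Cmod z * Series B).
  { replace (Cmod z ^ 2) with (Re (Cconj z * z)%C)
      by (rewrite Cmod2_alt; destruct z; simpl; ring).
    unfold z at 2. rewrite <- CSeries_scal_l by exact (ex_CSeries_le w B w_le_B B_ex).
    rewrite <- Series_scal_l. eapply Rle_trans; [apply Rle_abs|].
    eapply Rle_trans; [apply (Series_Rabs _ abs_ex)|].
    apply Series_le; trivial. intro n; split; [apply Rabs_pos|].
    eapply Rle_trans; [apply re_le_Cmod | apply cz_le_B]. }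
  assert (SB_ge0 : 0 <= Series B).
  { apply Series_ge0; trivial. intro n. eapply Rle_trans; [apply Cmod_ge_0 | apply w_le_B]. }
  pose proof (Cmod_ge_0 z). nra.
Qed.

Definition CSeries2 (z : nat -> nat -> C) : C := CSeries (fun i => CSeries (z i)).

Section DominatedDoubleSeries.

Variables (b : nat -> nat -> R) (M : R).
Hypothesis b_ge0 : forall i j, 0 <= b i j.
Hypothesis b_rect : forall m n, sum_f_R0 (fun i => sum_f_R0 (b i) n) m <= M.

Lemma ex_series_row (i : nat) : ex_series (b i).
Proof.
  apply (nonneg_series_bounded (b i) M (b_ge0 i)). intro n.
  eapply Rle_trans; [|apply (b_rect i n)].
  destruct i as [|i]; simpl; [lra|].
  assert (0 <= sum_f_R0 (fun i => sum_f_R0 (b i) n) i)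
    by (apply cond_pos_sum; intro; apply cond_pos_sum, b_ge0).
  lra.
Qed.

Lemma Series_rows_bounded :
  ex_series (fun i => Series (b i)) /\ Series (fun i => Series (b i)) <= M.
Proof.
  apply nonneg_series_bounded.
  - intro i. apply Series_ge0; [apply b_ge0 | apply ex_series_row].
  - intro m. rewrite <- (is_series_unique _ _ (is_series_sum_f_R0 b m ex_series_row)).
    apply nonneg_series_bounded.
    + intro; apply cond_pos_sum; intro; apply b_ge0.
    + intro n. rewrite <- sum_f_R0_swap. apply b_rect.
Qed.

Definition dominated (z : nat -> nat -> C) : Prop :=
  exists c, 0 <= c /\ forall i j, Cmod (z i j) <= c * b i j.

Lemma dominated_scal_l (x : C) (z : nat -> nat -> C) :
  dominated z -> dominated (fun i j => x * z i j)%C.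
Proof.
  intros (c & c_ge0 & z_le). exists (Cmod x * c).
  split; [apply Rmult_le_pos; [apply Cmod_ge_0 | exact c_ge0]|].
  intros i j. rewrite Cmod_mult, Rmult_assoc.
  apply Rmult_le_compat_l; [apply Cmod_ge_0 | apply z_le].
Qed.

Lemma dominated_summable (z : nat -> nat -> C) :
  dominated z -> (forall i, ex_CSeries (z i)) /\ ex_CSeries (fun i => CSeries (z i)).
Proof.
  intros (c & c_ge0 & z_le).
  split; [intro i; exact (ex_CSeries_le _ _ (z_le i) (ex_series_scal_l c _ (ex_series_row i)))|].
  apply (ex_CSeries_le _ (fun i => c * Series (b i))).
  - intro i. rewrite <- Series_scal_l.
    exact (Cmod_CSeries_le _ _ (z_le i) (ex_series_scal_l c _ (ex_series_row i))).
  - exact (ex_series_scal_l c _ (proj1 Series_rows_bounded)).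
Qed.

Lemma Cmod_CSeries2_le (z : nat -> nat -> C) (c : R) :
  0 <= c -> (forall i j, Cmod (z i j) <= c * b i j) -> Cmod (CSeries2 z) <= c * M.
Proof.
  intros c_ge0 z_le. destruct Series_rows_bounded as [rows_ex rows_le].
  eapply Rle_trans; [apply (Cmod_CSeries_le _ (fun i => c * Series (b i)))|].
  - intro i. rewrite <- Series_scal_l.
    exact (Cmod_CSeries_le _ _ (z_le i) (ex_series_scal_l c _ (ex_series_row i))).
  - exact (ex_series_scal_l c _ rows_ex).
  - rewrite Series_scal_l. now apply Rmult_le_compat_l.
Qed.

Lemma CSeries2_scal_l (x : C) (z : nat -> nat -> C) :
  dominated z -> CSeries2 (fun i j => x * z i j)%C = (x * CSeries2 z)%C.
Proof.
  intro z_dom. destruct (dominated_summable z z_dom) as [rows_ex sums_ex].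
  unfold CSeries2. rewrite <- CSeries_scal_l by exact sums_ex.
  apply CSeries_ext; intro i. now apply CSeries_scal_l.
Qed.

Lemma CSeries2_minus (z w : nat -> nat -> C) :
  dominated z -> dominated w ->
  CSeries2 (fun i j => z i j - w i j)%C = (CSeries2 z - CSeries2 w)%C.
Proof.
  intros z_dom w_dom.
  destruct (dominated_summable z z_dom) as [z_rows z_sums].
  destruct (dominated_summable w w_dom) as [w_rows w_sums].
  unfold CSeries2. rewrite <- CSeries_minus by assumption.
  apply CSeries_ext; intro i. now apply CSeries_minus.
Qed.

Lemma CSeries2_sub_corner (z : nat -> nat -> C) :
  dominated z ->
  CSeries2 (fun i j => z i j - delta0 (delta0 (z 0 0)%nat i) j)%C = (CSeries2 z - z 0%nat 0%nat)%C.
Proof.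
  intros [c [c_ge0 z_le]]. rewrite CSeries2_minus.
  - unfold CSeries2 at 2. rewrite (CSeries_ext _ (delta0 (z 0 0)%nat)), CSeries_delta0.
    + reflexivity.
    + intro i. apply CSeries_delta0.
  - now exists c.
  - exists c. split; [assumption|].
    intros [|i] [|j]; simpl; try (rewrite Cmod_0; apply Rmult_le_pos; trivial).
    apply z_le.
Qed.

Lemma CSeries2_sub_first_column (z : nat -> nat -> C) :
  dominated z ->
  CSeries2 (fun i j => z i j - delta0 (z i 0%nat) j)%C = (CSeries2 z - CSeries (fun i => z i 0%nat))%C.
Proof.
  intros [c [c_ge0 z_le]]. rewrite CSeries2_minus.
  - unfold CSeries2 at 2. now rewrite (CSeries_ext _ (fun i => z i 0%nat)) by (intro; apply CSeries_delta0).
  - now exists c.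
  - exists c. split; [assumption|].
    intros i [|j]; simpl; [apply z_le | rewrite Cmod_0; apply Rmult_le_pos; trivial].
Qed.

End DominatedDoubleSeries.

Lemma Re_opp (s : C) : Re (- s)%C = - Re s.
Proof. reflexivity. Qed.

Lemma Rpower_gt0 (x y : R) : 0 < Rpower x y.
Proof. apply exp_pos. Qed.

Lemma Cmod_cpow (n : nat) (s : C) : Cmod (cpow n s) = Rpower (INR n) (Re s).
Proof.
  unfold Cmod, cpow, Rpower; cbn [fst snd].
  set (e := exp (Re s * ln (INR n))). set (y := Im s * ln (INR n)).
  replace ((e * cos y) ^ 2 + (e * sin y) ^ 2) with (e ^ 2).
  - apply sqrt_pow2. left; apply exp_pos.
  - pose proof (sin2_cos2 y) as pythagoras. unfold Rsqr in pythagoras.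
    transitivity (e ^ 2 * (sin y * sin y + cos y * cos y)); [rewrite pythagoras|]; ring.
Qed.

Lemma cpow_mul_opp (n : nat) (s : C) : (cpow n s * cpow n (- s) = 1)%C.
Proof.
  unfold cpow. rewrite Re_opp. change (Im (- s)%C) with (- Im s).
  rewrite <- !Ropp_mult_distr_l, cos_neg, sin_neg, exp_Ropp.
  set (e := exp (Re s * ln (INR n))). set (y := Im s * ln (INR n)).
  assert (e_pos : 0 < e) by apply exp_pos.
  pose proof (sin2_cos2 y) as pythagoras. unfold Rsqr in pythagoras.
  unfold Cmult; cbn [fst snd]. apply injective_projections; cbn [fst snd RtoC].
  - field_simplify; [|lra]. rewrite Rplus_comm. unfold pow. rewrite !Rmult_1_r, pythagoras. reflexivity.
  - field; lra.
Qed.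

(* k^sigma m^-sigma = weight k m sigma r * m^-r: the factor by which a shifted,
   rescaled term exceeds its majorant at abscissa r. *)
Definition weight (k m : nat) (sigma r : R) : R :=
  Rpower (INR k) sigma * Rpower (INR m) (r - sigma).

Definition tail_factor (k : nat) (sigma r : R) : R :=
  Rpower (INR k) sigma / Rpower (INR (k + 1)) (sigma - r).

Lemma weight_gt0 (k m : nat) (sigma r : R) : 0 < weight k m sigma r.
Proof. apply Rmult_lt_0_compat; apply Rpower_gt0. Qed.

Lemma weight_diag (k : nat) (sigma r : R) : weight k k sigma r = Rpower (INR k) r.
Proof. unfold weight. rewrite <- Rpower_plus. f_equal. ring. Qed.

Lemma weight_le_tail_factor (k m : nat) (sigma r : R) :
  (k + 1 <= m)%nat -> r <= sigma -> weight k m sigma r <= tail_factor k sigma r.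
Proof.
  intros km r_le. unfold weight, tail_factor, Rdiv.
  rewrite <- (Ropp_involutive (r - sigma)), Rpower_Ropp, Ropp_minus_distr.
  apply Rmult_le_compat_l; [left; apply Rpower_gt0|].
  apply Rinv_le_contravar; [apply Rpower_gt0|].
  apply Rle_Rpower_l; [lra|]. split.
  - apply lt_0_INR. lia.
  - apply le_INR, km.
Qed.

Lemma tail_factor_gt0 (k : nat) (sigma r : R) : 0 < tail_factor k sigma r.
Proof. apply Rdiv_lt_0_compat; apply Rpower_gt0. Qed.

Lemma Rpower_nat_le (n : nat) (x y : R) :
  (0 < n)%nat -> x <= y -> Rpower (INR n) x <= Rpower (INR n) y.
Proof. intros n_pos x_le_y. apply Rle_Rpower; trivial. apply (le_INR 1), n_pos. Qed.

Definition dd_term (a : nat -> nat -> C) (k l : nat) (s u : C) (i j : nat) : C :=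
  (a (i + k)%nat (j + l)%nat * cpow (i + k) (- s) * cpow (j + l) (- u))%C.

Definition dd_majorant (a : nat -> nat -> C) (k l : nat) (r : R) (i j : nat) : R :=
  Cmod (a (i + k)%nat (j + l)%nat) * Rpower (INR (i + k)) (- r) * Rpower (INR (j + l)) (- r).

Lemma dd_majorant_ge0 (a : nat -> nat -> C) (k l : nat) (r : R) (i j : nat) :
  0 <= dd_majorant a k l r i j.
Proof.
  unfold dd_majorant. pose proof (Cmod_ge_0 (a (i + k)%nat (j + l)%nat)).
  pose proof (Rpower_gt0 (INR (i + k)) (- r)). pose proof (Rpower_gt0 (INR (j + l)) (- r)).
  apply Rmult_le_pos; [apply Rmult_le_pos|]; lra.
Qed.

Lemma tail_factor_mul (k l : nat) (sigma tau r : R) :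
  Rpower (INR k) sigma * Rpower (INR l) tau
    / (Rpower (INR (k + 1)) (sigma - r) * Rpower (INR (l + 1)) (tau - r))
  = tail_factor k sigma r * tail_factor l tau r.
Proof. unfold tail_factor, Rdiv. rewrite Rinv_mult. ring. Qed.

Section Estimates.

Variables (a : nat -> nat -> C) (k l : nat) (r : R) (s u : C).
Hypotheses (k_pos : (0 < k)%nat) (l_pos : (0 < l)%nat) (r_lt_s : r < Re s) (r_lt_u : r < Re u).

Lemma dd_term_dominated : dominated (dd_majorant a k l r) (dd_term a k l s u).
Proof.
  exists 1. split; [lra|]. intros i j.
  unfold dd_term, dd_majorant. rewrite Rmult_1_l, !Cmod_mult, !Cmod_cpow, !Re_opp.
  apply Rmult_le_compat; try (left; apply Rpower_gt0).
  - apply Rmult_le_pos; [apply Cmod_ge_0 | left; apply Rpower_gt0].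
  - apply Rmult_le_compat_l; [apply Cmod_ge_0|]. apply Rpower_nat_le; [lia | lra].
  - apply Rpower_nat_le; [lia | lra].
Qed.

Lemma Cmod_scaled_dd_term (i j : nat) :
  Cmod (cpow k s * cpow l u * dd_term a k l s u i j)%C
  = weight k (i + k) (Re s) r * weight l (j + l) (Re u) r * dd_majorant a k l r i j.
Proof.
  assert (split_exponent : forall (m : nat) (sigma : R),
    Rpower (INR m) (- sigma) = Rpower (INR m) (r - sigma) * Rpower (INR m) (- r)).
  { intros m sigma. rewrite <- Rpower_plus. f_equal. ring. }
  unfold dd_term, dd_majorant, weight.
  rewrite !Cmod_mult, !Cmod_cpow, !Re_opp.
  rewrite (split_exponent (i + k)%nat), (split_exponent (j + l)%nat). ring.
Qed.

Lemma Cmod_lscaled_dd_term (i j : nat) :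
  Cmod (cpow l u * dd_term a k l s u i j)%C
  = Rpower (INR k) (- Re s)
    * (weight k (i + k) (Re s) r * weight l (j + l) (Re u) r * dd_majorant a k l r i j).
Proof.
  rewrite <- Cmod_scaled_dd_term, <- Re_opp, <- Cmod_cpow, <- Cmod_mult. f_equal.
  transitivity ((cpow k s * cpow k (- s)) * (cpow l u * dd_term a k l s u i j))%C;
    [rewrite cpow_mul_opp|]; ring.
Qed.

Lemma scaled_dd_term_corner : (cpow k s * cpow l u * dd_term a k l s u 0 0 = a k l)%C.
Proof.
  unfold dd_term. rewrite !Nat.add_0_l.
  transitivity (a k l * (cpow k s * cpow k (- s)) * (cpow l u * cpow l (- u)))%C; [ring|].
  rewrite !cpow_mul_opp. ring.
Qed.

Lemma scaled_dd_term_first_column (i : nat) :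
  (cpow l u * dd_term a k l s u i 0 = a (i + k)%nat l * cpow (i + k) (- s))%C.
Proof.
  unfold dd_term. rewrite Nat.add_0_l.
  transitivity (a (i + k)%nat l * cpow (i + k) (- s) * (cpow l u * cpow l (- u)))%C; [ring|].
  rewrite cpow_mul_opp. ring.
Qed.

Lemma corner_estimate (i j : nat) :
  let z i j := (cpow k s * cpow l u * dd_term a k l s u i j)%C in
  Cmod (z i j - delta0 (delta0 (z 0 0)%nat i) j)%C
  <= (Rpower (INR k) r + Rpower (INR l) r + 1)
     * (tail_factor l (Re u) r + tail_factor k (Re s) r
        + tail_factor k (Re s) r * tail_factor l (Re u) r)
     * dd_majorant a k l r i j.
Proof.
  intro z.
  pose proof (Rpower_gt0 (INR k) r). pose proof (Rpower_gt0 (INR l) r).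
  pose proof (tail_factor_gt0 k (Re s) r) as Tk_pos.
  pose proof (tail_factor_gt0 l (Re u) r) as Tl_pos.
  pose proof (Rmult_lt_0_compat _ _ Tk_pos Tl_pos).
  pose proof (dd_majorant_ge0 a k l r i j).
  destruct i as [|i], j as [|j]; cbn [delta0].
  - rewrite Cminus_diag, Cmod_0. apply Rmult_le_pos; [|assumption]. nra.
  - unfold z; rewrite Cminus_0_r, Cmod_scaled_dd_term.
    apply Rmult_le_compat_r; [assumption|].
    rewrite Nat.add_0_l, weight_diag.
    pose proof (weight_le_tail_factor l (S j + l) (Re u) r ltac:(lia) ltac:(lra)).
    nra.
  - unfold z; rewrite Cminus_0_r, Cmod_scaled_dd_term.
    apply Rmult_le_compat_r; [assumption|].
    rewrite Nat.add_0_l, weight_diag.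
    pose proof (weight_le_tail_factor k (S i + k) (Re s) r ltac:(lia) ltac:(lra)).
    nra.
  - unfold z; rewrite Cminus_0_r, Cmod_scaled_dd_term.
    apply Rmult_le_compat_r; [assumption|].
    pose proof (weight_le_tail_factor k (S i + k) (Re s) r ltac:(lia) ltac:(lra)).
    pose proof (weight_le_tail_factor l (S j + l) (Re u) r ltac:(lia) ltac:(lra)).
    pose proof (weight_gt0 k (S i + k) (Re s) r).
    nra.
Qed.

Lemma column_estimate (i j : nat) :
  let z i j := (cpow l u * dd_term a k l s u i j)%C in
  Cmod (z i j - delta0 (z i 0%nat) j)%C
  <= (1 + Rpower (INR k) (- r))
     * (tail_factor l (Re u) r + tail_factor k (Re s) r * tail_factor l (Re u) r)
     * dd_majorant a k l r i j.
Proof.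
  intro z.
  assert (ks_le_kr : Rpower (INR k) (- Re s) <= Rpower (INR k) (- r))
    by (apply Rpower_nat_le; [assumption | lra]).
  assert (kr_inv : Rpower (INR k) (- r) * Rpower (INR k) r = 1).
  { rewrite <- Rpower_plus, Rplus_opp_l. apply Rpower_O, lt_0_INR, k_pos. }
  pose proof (Rpower_gt0 (INR k) (- Re s)). pose proof (Rpower_gt0 (INR k) (- r)).
  pose proof (Rpower_gt0 (INR k) r).
  pose proof (tail_factor_gt0 k (Re s) r) as Tk_pos.
  pose proof (tail_factor_gt0 l (Re u) r) as Tl_pos.
  pose proof (Rmult_lt_0_compat _ _ Tk_pos Tl_pos).
  pose proof (dd_majorant_ge0 a k l r i j).
  destruct j as [|j]; cbn [delta0].
  - rewrite Cminus_diag, Cmod_0. apply Rmult_le_pos; [|assumption]. nra.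
  - unfold z; rewrite Cminus_0_r, Cmod_lscaled_dd_term, <- !Rmult_assoc.
    apply Rmult_le_compat_r; [assumption|].
    pose proof (weight_le_tail_factor l (S j + l) (Re u) r ltac:(lia) ltac:(lra)).
    pose proof (weight_gt0 l (S j + l) (Re u) r).
    destruct i as [|i].
    + rewrite Nat.add_0_l, weight_diag.
      assert (Rpower (INR k) (- Re s) * Rpower (INR k) r <= 1) by nra.
      nra.
    + pose proof (weight_le_tail_factor k (S i + k) (Re s) r ltac:(lia) ltac:(lra)).
      pose proof (weight_gt0 k (S i + k) (Re s) r).
      assert (weight k (S i + k) (Re s) r * weight l (S j + l) (Re u) r
              <= tail_factor k (Re s) r * tail_factor l (Re u) r)
        by (apply Rmult_le_compat; lra).
      nra.
Qed.

Variable M : R.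
Hypothesis majorant_rect :
  forall m n, sum_f_R0 (fun i => sum_f_R0 (dd_majorant a k l r i) n) m <= M.

Lemma ddseries_corner_bound :
  Cmod (cpow k s * cpow l u * ddseries a k l s u - a k l)%C
  <= (Rpower (INR k) r + Rpower (INR l) r + 1)
     * (tail_factor l (Re u) r + tail_factor k (Re s) r
        + tail_factor k (Re s) r * tail_factor l (Re u) r) * M.
Proof.
  pose proof (dd_majorant_ge0 a k l r) as b_ge0.
  pose proof (Rpower_gt0 (INR k) r). pose proof (Rpower_gt0 (INR l) r).
  pose proof (tail_factor_gt0 k (Re s) r) as Tk_pos.
  pose proof (tail_factor_gt0 l (Re u) r) as Tl_pos.
  pose proof (Rmult_lt_0_compat _ _ Tk_pos Tl_pos).
  change (ddseries a k l s u) with (CSeries2 (dd_term a k l s u)).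
  rewrite <- scaled_dd_term_corner.
  rewrite <- (CSeries2_scal_l _ _ b_ge0 majorant_rect _ _ dd_term_dominated).
  rewrite <- (CSeries2_sub_corner _ _ b_ge0 majorant_rect _ (dominated_scal_l _ _ _ dd_term_dominated)).
  apply (Cmod_CSeries2_le _ _ b_ge0 majorant_rect); [nra|].
  intros i j. apply corner_estimate.
Qed.

Lemma ddseries_drow_bound :
  Cmod (cpow l u * ddseries a k l s u - drow a k l s)%C
  <= (1 + Rpower (INR k) (- r))
     * (tail_factor l (Re u) r + tail_factor k (Re s) r * tail_factor l (Re u) r) * M.
Proof.
  pose proof (dd_majorant_ge0 a k l r) as b_ge0.
  pose proof (Rpower_gt0 (INR k) (- r)).
  pose proof (tail_factor_gt0 k (Re s) r) as Tk_pos.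
  pose proof (tail_factor_gt0 l (Re u) r) as Tl_pos.
  pose proof (Rmult_lt_0_compat _ _ Tk_pos Tl_pos).
  change (ddseries a k l s u) with (CSeries2 (dd_term a k l s u)). unfold drow.
  rewrite (CSeries_ext _ (fun i => cpow l u * dd_term a k l s u i 0%nat)%C)
    by (intro i; symmetry; apply scaled_dd_term_first_column).
  rewrite <- (CSeries2_scal_l _ _ b_ge0 majorant_rect _ _ dd_term_dominated).
  rewrite <- (CSeries2_sub_first_column _ _ b_ge0 majorant_rect _
                (dominated_scal_l _ _ _ dd_term_dominated)).
  apply (Cmod_CSeries2_le _ _ b_ge0 majorant_rect); [nra|].
  intros i j. apply column_estimate.
Qed.

End Estimates.

Theorem lemma2p5 (k l : nat) (a : nat -> nat -> C) (rho1 rho2 : R) :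
  (0 < k)%nat -> (0 < l)%nat ->
  dd_abs_conv a k l rho1 rho2 ->
  forall r : R, r > Rmax rho1 rho2 ->
  exists Cr Dr : R, 0 < Cr /\ 0 < Dr /\
    forall s u : C, Re s > r -> Re u > r ->
      Cmod (cpow k s * cpow l u * ddseries a k l s u - a k l)%C
        <= Cr * ( Rpower (INR l) (Re u) / Rpower (INR (l + 1)) (Re u - r)
                + Rpower (INR k) (Re s) / Rpower (INR (k + 1)) (Re s - r)
                + Rpower (INR k) (Re s) * Rpower (INR l) (Re u)
                  / (Rpower (INR (k + 1)) (Re s - r) * Rpower (INR (l + 1)) (Re u - r)))
      /\
      Cmod (cpow l u * ddseries a k l s u - drow a k l s)%C
        <= Dr * ( Rpower (INR l) (Re u) / Rpower (INR (l + 1)) (Re u - r)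
                + Rpower (INR k) (Re s) * Rpower (INR l) (Re u)
                  / (Rpower (INR (k + 1)) (Re s - r) * Rpower (INR (l + 1)) (Re u - r))).
Proof.
  intros k_pos l_pos abs_conv r r_gt.
  pose proof (Rmax_l rho1 rho2). pose proof (Rmax_r rho1 rho2).
  destruct (abs_conv r r ltac:(simpl; lra) ltac:(simpl; lra)) as [M majorant_rect].
  set (K1 := Rpower (INR k) r + Rpower (INR l) r + 1).
  set (K2 := 1 + Rpower (INR k) (- r)).
  pose proof (Rpower_gt0 (INR k) r). pose proof (Rpower_gt0 (INR l) r).
  pose proof (Rpower_gt0 (INR k) (- r)). pose proof (Rmax_l M 1). pose proof (Rmax_r M 1).
  exists (K1 * Rmax M 1), (K2 * Rmax M 1).
  split; [apply Rmult_lt_0_compat; unfold K1; lra|].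
  split; [apply Rmult_lt_0_compat; unfold K2; lra|].
  intros s u r_lt_s r_lt_u.
  rewrite tail_factor_mul. fold (tail_factor l (Re u) r) (tail_factor k (Re s) r).
  pose proof (tail_factor_gt0 k (Re s) r) as Tk_pos.
  pose proof (tail_factor_gt0 l (Re u) r) as Tl_pos.
  pose proof (Rmult_lt_0_compat _ _ Tk_pos Tl_pos).
  set (T1 := tail_factor l (Re u) r + tail_factor k (Re s) r
             + tail_factor k (Re s) r * tail_factor l (Re u) r).
  set (T2 := tail_factor l (Re u) r + tail_factor k (Re s) r * tail_factor l (Re u) r).
  assert (K1T1_ge0 : 0 <= K1 * T1) by (apply Rmult_le_pos; unfold K1, T1; lra).
  assert (K2T2_ge0 : 0 <= K2 * T2) by (apply Rmult_le_pos; unfold K2, T2; lra).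
  split.
  - apply (Rle_trans _ (K1 * T1 * M)); [|nra].
    exact (ddseries_corner_bound a k l r s u k_pos l_pos r_lt_s r_lt_u M majorant_rect).
  - apply (Rle_trans _ (K2 * T2 * M)); [|nra].
    exact (ddseries_drow_bound a k l r s u k_pos l_pos r_lt_s r_lt_u M majorant_rect).
Qed.
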